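(* Consider the noisy HK system (S1) under assumption (A1), with $r_{\min}<1$. Then for every initial state, the system asymptotically reaches quasi-synchronization almost surely if and only if $\eta\le r_{\min}/2$. Moreover, if $\eta\le r_{\min}/2$ and $\tau$ denotes the minimal $t$ with $d_{\mathcal V}(t)\le2\eta$, then $d_{\mathcal V}(t)\le 2\eta$ for all $t\ge\tau$, and there exist constants $\lambda_2\in(0,1)$, $\Lambda_2>0$ depending only on $n,\eta,\underline\rho$ and $r_1,\dots,r_n$ such that $P(\tau>s)\le(1-\lambda_2)^{\lfloor s/\Lambda_2\rfloor}$ for all $s\ge0$.
   Context: Fix an integer $n\ge3$, agent set $\mathcal V=\{1,\dots,n\}$, confidence thresholds $r_i\in(0,1]$ ($i\in\mathcal V$), $r_{\min}=\min_i r_i$, $r_{\max}=\max_i r_i$, and a noise amplitude $\eta>0$. Opinions $x_i(t)\in[0,1]$, $x(t)=(x_1(t),\dots,x_n(t))$, $t=0,1,2,\dots$, with arbitrary initial state $x(0)\in[0,1]^n$. The neighbor set is $\mathcal N_i(t)=\{j\in\mathcal V:|x_j(t)-x_i(t)|\le r_i\}$ (it contains $i$), and $\Pi_{[0,1]}(y)=\min\{1,\max\{0,y\}\}$. Let $d_{\mathcal V}(t)=\max_{i,j\in\mathcal V}|x_i(t)-x_j(t)|$ and $\overline d_{\mathcal V}=\limsup_{t\to\infty}d_{\mathcal V}(t)$. The system asymptotically reaches quasi-synchronization if $\overline d_{\mathcal V}\le r_{\min}$. System (S1): for all $i\in\mathcal V$, $t\ge0$, $x_i(t+1)=\Pi_{[0,1]}\big(|\mathcal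 N_i(t)|^{-1}\sum_{j\in\mathcal N_i(t)}x_j(t)+\xi_i(t)\big)$, with random noises $\xi_i(t)\in[-\eta,\eta]$. Assumption (A1): there is a constant $\underline\rho>0$ such that for every $t\ge0$, given any states $x(0),\dots,x(t)\in[0,1]^n$, $P\big(\bigcap_{i=1}^n\{\xi_i(t)\in[a_i,b_i]\}\,\big|\,x(0),\dots,x(t)\big)\ge\underline\rho\prod_{i=1}^n(b_i-a_i)$ for all reals $-\eta\le a_i<b_i\le\eta$. *)

From HB Require Import structures.
From mathcomp Require Import all_boot all_order all_algebra.
From mathcomp Require Import all_classical all_reals all_analysis.
Set Implicit Arguments. Unset Strict Implicit. Unset Printing Implicit Defensive.
Import Order.TTheory GRing.Theory Num.Theory.
Import numFieldNormedType.Exports.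
Local Open Scope ring_scope.

Section HK.
Variables (R : realType) (n : nat).

(* r_min = min_i r_i ; the neutral element 1 is harmless since r_i <= 1 and n >= 3 *)
Definition rmin (r : 'I_n -> R) : R := \big[Order.min/1]_(i < n) r i.

Definition proj01 (y : R) : R := Order.min 1 (Order.max 0 y).

Definition nbr (r : 'I_n -> R) (x : 'I_n -> R) (i : 'I_n) : pred 'I_n :=
  fun j => `|x j - x i| <= r i.

Definition nbr_avg (r : 'I_n -> R) (x : 'I_n -> R) (i : 'I_n) : R :=
  (\sum_(j | nbr r x i j) x j) / (#|[pred j | nbr r x i j]|)%:R.

Definition diam (x : 'I_n -> R) : R :=
  \big[Order.max/0]_(i < n) \big[Order.max/0]_(j < n) `|x i - x j|.

Definition in01 (x : 'I_n -> R) : Prop := forall i, 0 <= x i <= 1.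

Fixpoint traj {T : Type} (r : 'I_n -> R) (xi : 'I_n -> nat -> T -> R)
    (x0 : 'I_n -> R) (t : nat) (w : T) : 'I_n -> R :=
  match t with
  | 0 => x0
  | t'.+1 => let x := traj r xi x0 t' w in
             fun i => proj01 (nbr_avg r x i + xi i t' w)
  end.

Definition quasi_sync (r : 'I_n -> R) (x : nat -> 'I_n -> R) : Prop :=
  limn_sup (fun t => diam (x t)) <= rmin r.

Local Open Scope classical_set_scope.

(* generators of sigma(x(0),...,x(t)) : preimages of Borel sets under the
   coordinates x_i(s), i in V, s <= t *)
Definition past_gen {T : Type} (r : 'I_n -> R) (xi : 'I_n -> nat -> T -> R)
    (x0 : 'I_n -> R) (t : nat) : set (set T) :=
  [set A | exists i : 'I_n, exists s : nat, (s <= t)%N /\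
     exists C : set R, measurable C /\ A = (fun w => traj r xi x0 s w i) @^-1` C].

(* Assumption (A1) for the trajectory started at x0, stated in the standard way
   for conditional probabilities: for every event B of sigma(x(0),...,x(t)),
   P({xi(t) in box} /\ B) >= rho * vol(box) * P(B). *)
Definition A1 {d} {T : measurableType d} (P : probability T R) (r : 'I_n -> R)
    (eta rho : R) (xi : 'I_n -> nat -> T -> R) (x0 : 'I_n -> R) : Prop :=
  forall (t : nat) (a b : 'I_n -> R),
    (forall i, - eta <= a i /\ a i < b i /\ b i <= eta) ->
    forall B : set T, <<s past_gen r xi x0 t >> B ->
      ((rho * \prod_(i < n) (b i - a i))%:E * P B <=
        P ([set w | forall i, (a i <= xi i t w <= b i)%R] `&` B))%E.

Definition noise_ok {d} {T : measurableType d} (P : probability T R)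
    (r : 'I_n -> R) (eta rho : R) (xi : ('I_n -> R) -> 'I_n -> nat -> T -> R) : Prop :=
  forall x0, in01 x0 ->
    (forall i t, measurable_fun setT (xi x0 i t)) /\
    (forall i t w, - eta <= xi x0 i t w <= eta) /\
    A1 P r eta rho (xi x0) x0.

End HK.

(* Under (A1) the noise follows any prescribed sequence of boxes of positive
   width with probability bounded below, whatever the past.  Pushing every
   opinion down by at least eta/2 for K = push_steps eta steps brings all of
   them to 0, so from any state the diameter drops to 0 within K steps with
   probability at least q > 0; restarting every K steps gives the geometric
   tail bound.  Once d <= 2 eta <= r_min, all agents are mutual neighbours and
   share one average, so only the noise spreads them and d stays <= 2 eta.
   Conversely, if eta > r_min / 2, after reaching 0 one step lifts everybody
   to [u - e, u] and one more step pushes a single agent up and the others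
   down, opening a gap larger than r_min; this recurs almost surely after any
   time, contradicting limsup d <= r_min. *)

From HB Require Import structures.
From mathcomp Require Import all_boot all_order all_algebra.
From mathcomp Require Import all_classical all_reals all_analysis.
From mathcomp Require Import measurable_realfun ring lra zify.
Import Order.TTheory GRing.Theory Num.Theory.
Import numFieldNormedType.Exports.
Set Implicit Arguments.
Unset Strict Implicit.
Local Open Scope ring_scope.
Local Open Scope classical_set_scope.

Section Dynamics.
Variables (R : realType) (n : nat).
Implicit Types (r x z lo hi : 'I_n -> R).

Definition inbox lo hi x : Prop := forall i, lo i <= x i <= hi i.

Definition step r x z : 'I_n -> R := fun i => proj01 (nbr_avg r x i + z i).

Lemma trajS {T : Type} r (xi : 'I_n -> nat -> T -> R) x0 t w :
  traj r xi x0 t.+1 w = step r (traj r xi x0 t w) (fun i => xi i t w).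
Proof. by []. Qed.

Lemma proj01_ge0 (y : R) : 0 <= proj01 y.
Proof. by rewrite /proj01 le_min ler01 le_max lexx. Qed.

Lemma proj01_le1 (y : R) : proj01 y <= 1.
Proof. by rewrite /proj01 ge_min lexx. Qed.

Lemma proj01_le (y c : R) : 0 <= c -> y <= c -> proj01 y <= c.
Proof. by move=> c0 yc; rewrite /proj01 ge_min ge_max c0 yc orbT. Qed.

Lemma proj01_ge (y c : R) : c <= 1 -> c <= y -> c <= proj01 y.
Proof. by move=> c1 yc; rewrite /proj01 le_min le_max c1 yc orbT. Qed.

Lemma proj01_lipschitz (y y' : R) : `|proj01 y - proj01 y'| <= `|y - y'|.
Proof.
have := ler_norm (y - y'); have := ler_norm (y' - y); rewrite distrC => h1 h2.
rewrite /proj01 !maxEle !minEle ler_norml.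
case: (leP 0 y) => ?; case: (leP 0 y') => ?; rewrite ?ler10 /=;
  case: (leP 1 y) => ?; case: (leP 1 y') => ?; apply/andP; split; lra.
Qed.

Lemma diam_ge x i j : `|x i - x j| <= diam x.
Proof. exact: le_trans (le_bigmax _ _ j) (le_bigmax _ _ i). Qed.

Lemma diam_ge0 x : 0 <= diam x.
Proof. exact: bigmax_ge_id. Qed.

Lemma diam_le x c : 0 <= c -> (forall i j, `|x i - x j| <= c) -> diam x <= c.
Proof. by move=> c0 h; do 2![apply: bigmax_le => // ? _]. Qed.

Lemma diam_cst_box x (a b : R) :
  a <= b -> inbox (cst a) (cst b) x -> diam x <= b - a.
Proof.
move=> ab hx; apply: diam_le => [|i j]; first lra.
by have := hx i; have := hx j; rewrite /cst ler_norml => /andP[? ?] /andP[? ?];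
  apply/andP; split; lra.
Qed.

Lemma diam_le1 x : in01 x -> diam x <= 1.
Proof. by move=> hx; have := diam_cst_box ler01 hx; rewrite subr0. Qed.

Lemma rmin_le r i : rmin r <= r i.
Proof. exact: bigmin_le. Qed.

Lemma rmin_ge0 r : (forall i, 0 <= r i) -> 0 <= rmin r.
Proof. by move=> r0; apply: le_bigmin. Qed.

Lemma nbr_avg_bounds r x i (lo hi : R) : 0 <= r i -> (forall j, lo <= x j <= hi) ->
  lo <= nbr_avg r x i <= hi.
Proof.
move=> ri h; rewrite /nbr_avg; set S := [pred j | nbr r x i j].
have S0 : 0 < (#|S|)%:R :> R.
  by rewrite ltr0n; apply/card_gt0P; exists i; rewrite inE /nbr subrr normr0.
rewrite ler_pdivlMr // ler_pdivrMr // !mulr_natr -!sumr_const.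
by apply/andP; split; apply: ler_sum => j _; case/andP: (h j).
Qed.

Lemma traj_in01 {T : Type} r (xi : 'I_n -> nat -> T -> R) x0 t w :
  in01 x0 -> in01 (traj r xi x0 t w).
Proof. by move=> h; case: t => [//|t] i; rewrite proj01_ge0 proj01_le1. Qed.

Lemma nbr_avg_const r x i j : diam x <= rmin r -> nbr_avg r x i = nbr_avg r x j.
Proof.
move=> dx; suff all k : nbr r x k = xpredT by rewrite /nbr_avg !all.
apply/funext => l; apply/idP; apply: le_trans (diam_ge x l k) _.
exact: le_trans dx (rmin_le r k).
Qed.

Lemma diam_step_le r x z (c : R) : diam x <= rmin r -> 0 <= c ->
  (forall i j, `|z i - z j| <= c) -> diam (step r x z) <= c.
Proof.
move=> dx c0 hz; apply: diam_le => // i j; rewrite /step (nbr_avg_const i j dx).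
by apply: le_trans (proj01_lipschitz _ _) _; rewrite opprD addrACA subrr add0r.
Qed.

Lemma diam_traj_invariant {T : Type} r (xi : 'I_n -> nat -> T -> R) x0 (eta : R) w tau :
  0 <= eta -> 2 * eta <= rmin r -> (forall i t, - eta <= xi i t w <= eta) ->
  diam (traj r xi x0 tau w) <= 2 * eta ->
  forall t, (tau <= t)%N -> diam (traj r xi x0 t w) <= 2 * eta.
Proof.
move=> e0 er hxi h t /subnK <-; elim: (t - tau)%N => [//|k IH].
rewrite addSn trajS; apply: diam_step_le; [lra|lra|move=> i j].
have := hxi i (k + tau)%N; have := hxi j (k + tau)%N.
by rewrite ler_norml => /andP[? ?] /andP[? ?]; apply/andP; split; lra.
Qed.

End Dynamics.

Section Measurability.
Variables (R : realType) (n : nat) (d : measure_display) (T : measurableType d).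

Lemma measurable_forall_ord (F : 'I_n -> set T) :
  (forall i, measurable (F i)) -> measurable [set w | forall i, F i w].
Proof.
move=> mF; rewrite (_ : [set w | _] = \bigcap_(i in setT) F i).
  by apply: fin_bigcap_measurable => //; exact: finite_finset.
by apply/seteqP; split=> w /= h i //; exact: h.
Qed.

Lemma measurable_inbox (f : 'I_n -> T -> R) (lo hi : 'I_n -> R) :
  (forall i, measurable_fun setT (f i)) ->
  measurable [set w | inbox lo hi (fun i => f i w)].
Proof.
move=> mf; rewrite (_ : [set w | _] = [set w | forall i, (f i @^-1` `[lo i, hi i]) w]).
  apply: measurable_forall_ord => i.
  by rewrite -[X in measurable X]setTI; exact: mf.
by apply/seteqP; split=> w /= h i; have := h i; rewrite /= in_itv.
Qed.

Lemma measurable_proj01 : measurable_fun setT (@proj01 R).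
Proof.
apply: measurable_minr; first exact: measurable_cst.
by apply: measurable_maxr; [exact: measurable_cst|exact: measurable_id].
Qed.

(* 1 / |N_i| as a finite sum of indicators, so that measurability of the
   average reduces to sums, products and comparisons. *)
Lemma nbr_avgE (r x : 'I_n -> R) i :
  nbr_avg r x i = (\sum_(j < n) (if nbr r x i j then x j else 0)) *
    \sum_(k < n.+1) (if \sum_(j < n) (if nbr r x i j then 1 else 0) == k%:R :> R
                     then k%:R^-1 else 0).
Proof.
rewrite /nbr_avg -big_mkcond /=; congr (_ * _).
set S := [pred j | nbr r x i j].
have -> : \sum_(j < n) (if nbr r x i j then 1 else 0) = #|S|%:R :> R.
  by rewrite -big_mkcond /= -sum1_card natr_sum; apply: eq_bigl => j; rewrite inE.
have cS : (#|S| < n.+1)%N by rewrite ltnS (leq_trans (max_card _)) // card_ord.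
rewrite (bigD1 (Ordinal cS)) //= eqxx big1 ?addr0 // => k kS.
by rewrite eqr_nat; case: eqP => // Sk; move: kS; rewrite -(inj_eq val_inj) /= Sk eqxx.
Qed.

Lemma measurable_traj (r : 'I_n -> R) (xi : 'I_n -> nat -> T -> R) x0 :
  (forall i t, measurable_fun setT (xi i t)) ->
  forall t i, measurable_fun setT (fun w => traj r xi x0 t w i).
Proof.
move=> mxi; elim=> [|t IH] i; first exact: measurable_cst.
have mnbr j : measurable_fun setT (fun w => nbr r (traj r xi x0 t w) i j).
  apply: measurable_fun_ler; last exact: measurable_cst.
  by apply: measurableT_comp => //; exact: measurable_funB.
apply: measurableT_comp measurable_proj01 _; apply: measurable_funD => //.
under eq_fun do rewrite nbr_avgE; apply: measurable_funM.
  by apply: measurable_sum => j; apply: measurable_fun_ifT.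
apply: measurable_sum => k; apply: measurable_fun_ifT => //.
apply: measurable_fun_eqr => //.
by apply: measurable_sum => j; apply: measurable_fun_ifT.
Qed.

Lemma measurable_bigmax (I : Type) (s : seq I) (f : I -> T -> R) :
  (forall i, measurable_fun setT (f i)) ->
  measurable_fun setT (fun w => \big[Order.max/0]_(i <- s) f i w).
Proof.
move=> mf; elim: s => [|i s IH].
  by under eq_fun do rewrite big_nil; exact: measurable_cst.
by under eq_fun do rewrite big_cons; exact: measurable_maxr.
Qed.

Lemma measurable_diam (f : 'I_n -> T -> R) :
  (forall i, measurable_fun setT (f i)) ->
  measurable_fun setT (fun w => diam (fun i => f i w)).
Proof.
move=> mf; do 2!apply: measurable_bigmax => ?.
by apply: measurableT_comp => //; exact: measurable_funB.
Qed.

End Measurability.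

Lemma geometric_le0 (R : realType) (p q : R) :
  0 < q <= 1 -> (forall m, p <= (1 - q) ^+ m) -> p <= 0.
Proof.
move=> /andP[q0 q1] hp.
have h : (1 - q) ^+ m @[m --> \oo] --> (0 : R).
  by apply: cvg_expr; rewrite ger0_norm; lra.
rewrite -(cvg_lim _ h) //; apply: limr_ge; first by apply/cvg_ex; exists 0.
exact: nearW.
Qed.

Section LimSup.
Variables (R : realType) (u : nat -> R).
Hypothesis bu : bounded_fun u.

Lemma limn_sup_le_eventually c t1 :
  (forall t, (t1 <= t)%N -> u t <= c) -> limn_sup u <= c.
Proof.
move=> hc; rewrite limn_supE //; apply: (le_trans (y := sups u t1)).
  by apply: ge_inf; [exact: bounded_fun_has_lbound_sups|exists t1].
apply: ge_sup; first by exists (u t1); exists t1 => /=.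
by move=> _ [k /= kt <-]; exact: hc.
Qed.

Lemma limn_sup_lt_eventually c :
  limn_sup u < c -> exists M, forall t, (M <= t)%N -> u t < c.
Proof.
rewrite limn_supE // => /inf_lt [|_ [M _ <-] hM]; first by exists (sups u 0); exists 0%N.
exists M => t Mt; apply: le_lt_trans hM; apply: ub_le_sup; last by exists t.
exact/has_ubound_sdrop/bounded_fun_has_ubound.
Qed.

End LimSup.

Lemma bounded_diam_traj (R : realType) n (T : Type) (r : 'I_n -> R)
    (xi : 'I_n -> nat -> T -> R) x0 w :
  in01 x0 -> bounded_fun (fun t => diam (traj r xi x0 t w)).
Proof.
move=> hx0; exists 1; split; first exact: num_real.
move=> M M1 t _; rewrite /= ger0_norm ?diam_ge0 //.
by apply: le_trans (ltW M1); exact/diam_le1/traj_in01.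
Qed.

Section Probability.
Variables (R : realType) (d : measure_display) (T : measurableType d)
  (P : probability T R).
Implicit Types A B : set T.

Definition pr A : R := fine (P A).

Lemma prE A : measurable A -> P A = (pr A)%:E.
Proof. by move=> mA; rewrite /pr fineK // fin_num_measure. Qed.

Lemma pr_ge0 A : measurable A -> 0 <= pr A.
Proof. by move=> mA; rewrite -lee_fin -prE. Qed.

Lemma pr_le1 A : measurable A -> pr A <= 1.
Proof. by move=> mA; rewrite -lee_fin -prE // probability_le1. Qed.

Lemma pr_le A B : measurable A -> measurable B -> A `<=` B -> pr A <= pr B.
Proof. by move=> mA mB AB; rewrite -lee_fin -!prE //; apply: le_measure; rewrite ?inE. Qed.

Lemma prD A B : measurable A -> measurable B -> pr (A `\` B) = pr A - pr (A `&` B).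
Proof.
move=> mA mB; rewrite /pr measureD // ?fineB ?fin_num_measure //; first exact: measurableI.
exact: le_lt_trans (probability_le1 P mA) (ltry 1).
Qed.

End Probability.

Lemma max0_subr (R : realType) (a b : R) :
  0 <= b -> Num.max 0 (Num.max 0 a - b) = Num.max 0 (a - b).
Proof.
move=> b0; rewrite !maxEle; case: (leP 0 a) => a0 //.
by do 2 case: leP => ?; lra.
Qed.

Definition push_steps (R : realType) (eta : R) : nat := (Num.truncn (2 / eta)).+1.

Lemma push_steps_max0 (R : realType) (eta : R) : 0 < eta ->
  Num.max 0 (1 - (push_steps eta)%:R * (eta / 2)) = 0.
Proof.
move=> eta0; apply: max_l; have := truncnS_gt (2 / eta).
by rewrite ltr_pdivrMr // subr_le0 /push_steps; lra.
Qed.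

Definition push_prob (R : realType) (n : nat) (eta rho : R) : R :=
  (rho * (eta / 2) ^+ n) ^+ push_steps eta.

Lemma push_prob_gt0 (R : realType) n (eta rho : R) :
  0 < eta -> 0 < rho -> 0 < push_prob n eta rho.
Proof. by move=> eta0 rho0; rewrite exprn_gt0 // mulr_gt0 // exprn_gt0 // divr_gt0. Qed.

Section Reachability.
Variables (R : realType) (n : nat) (d : measure_display) (T : measurableType d)
  (P : probability T R) (r : 'I_n -> R) (eta rho : R)
  (xi : 'I_n -> nat -> T -> R) (x0 : 'I_n -> R).
Hypotheses (mxi : forall i t, measurable_fun setT (xi i t))
  (A1xi : A1 P r eta rho xi x0) (x0_01 : in01 x0).
Implicit Types (lo hi : 'I_n -> R) (F : set T).

Local Notation X := (traj r xi x0).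
Local Notation past t := (<<s past_gen r xi x0 t >>).

Definition in_box_at t lo hi : set T := [set w | inbox lo hi (X t w)].

Definition misses t0 L m lo hi : set T :=
  [set w | forall k, (k < m)%N -> ~ in_box_at (t0 + k * L + L) lo hi w].

Lemma past_mono s t F : (s <= t)%N -> past s F -> past t F.
Proof.
move=> st; apply: sub_sigma_algebra2 => _ [i [s' [s's [C [mC ->]]]]].
by exists i, s'; split; [exact: leq_trans st|exists C].
Qed.

Lemma past_setI t F F' : past t F -> past t F' -> past t (F `&` F').
Proof. exact: (@measurableI _ (g_sigma_algebraType (past_gen r xi x0 t))). Qed.

Lemma past_setC t F : past t F -> past t (~` F).
Proof. exact: sigma_algebraC. Qed.

Lemma past_setT t : past t setT.
Proof. exact: (@measurableT _ (g_sigma_algebraType (past_gen r xi x0 t))). Qed.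

Lemma past_measurable t F : past t F -> measurable F.
Proof.
apply: smallest_sub; first exact: sigma_algebra_measurable.
move=> _ [i [s [_ [C [mC ->]]]]].
by rewrite -[_ @^-1` _]setTI; exact: measurable_traj.
Qed.

Lemma past_in_box_at s t lo hi : (s <= t)%N -> past t (in_box_at s lo hi).
Proof.
move=> st; rewrite (_ : in_box_at s lo hi =
  [set w | forall i, ((fun w => X s w i) @^-1` `[lo i, hi i]) w]).
  apply: (measurable_forall_ord (T := g_sigma_algebraType (past_gen r xi x0 t))) => i.
  by apply: sub_sigma_algebra; exists i, s; split => //; exists `[lo i, hi i]; split.
by apply/seteqP; split=> w /= h i; have := h i; rewrite /= in_itv.
Qed.

Lemma measurable_in_box_at t lo hi : measurable (in_box_at t lo hi).
Proof. exact: past_measurable (past_in_box_at lo hi (leqnn t)). Qed.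

Lemma in_box_at01 t : in_box_at t (cst 0) (cst 1) = setT.
Proof. by apply/seteqP; split=> // w _; exact: traj_in01. Qed.

(* Integrated form of P(X (t + L) in B' | X 0, ..., X t) >= q on {X t in B}. *)
Definition reaches L lo hi lo' hi' (q : R) : Prop :=
  forall t F, past t F ->
    q * pr P (F `&` in_box_at t lo hi) <= pr P (F `&` in_box_at (t + L) lo' hi').

Lemma reaches0 lo hi : reaches 0 lo hi lo hi 1.
Proof. by move=> t F _; rewrite mul1r addn0. Qed.

Lemma reaches_trans L1 L2 lo hi lo1 hi1 lo2 hi2 q1 q2 :
  reaches L1 lo hi lo1 hi1 q1 -> reaches L2 lo1 hi1 lo2 hi2 q2 -> 0 <= q2 ->
  reaches (L1 + L2) lo hi lo2 hi2 (q1 * q2).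
Proof.
move=> h1 h2 q20 t F pF; rewrite mulrAC addnA.
apply: le_trans (ler_wpM2r q20 (h1 t F pF)) _; rewrite mulrC.
by apply: h2; exact: past_mono (leq_addr _ _) pF.
Qed.

Lemma reaches_step (a : 'I_n -> R) (w : R) lo hi lo' hi' : 0 < w ->
  (forall i, - eta <= a i /\ a i + w <= eta) ->
  (forall x z, inbox lo hi x -> inbox a (fun i => a i + w) z ->
     inbox lo' hi' (step r x z)) ->
  reaches 1 lo hi lo' hi' (rho * w ^+ n).
Proof.
move=> w0 ha trans t F pF.
set B := F `&` in_box_at t lo hi.
have pB : past t B.
  by apply: past_setI => //; exact: past_in_box_at.
set N := [set w' | inbox a (fun i => a i + w) (fun i => xi i t w')].
have mN : measurable N by exact: measurable_inbox.
have mB := past_measurable pB.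
have box i : - eta <= a i /\ a i < a i + w /\ a i + w <= eta.
  by have [? ?] := ha i; split; [|split]; lra.
have : ((rho * \prod_(i < n) (a i + w - a i))%:E * P B <= P (N `&` B))%E :=
  A1xi box pB.
rewrite (prE P mB) (prE P (measurableI _ _ mN mB)) -EFinM lee_fin.
under eq_bigr do rewrite addrC addKr.
rewrite prodr_const card_ord => /le_trans; apply; apply: pr_le.
- exact: measurableI.
- by apply: measurableI; [exact: past_measurable pF|exact: measurable_in_box_at].
- by move=> w' [Nw' [Fw' Bw']]; split => //; rewrite /in_box_at /= addn1; exact: trans.
Qed.

Lemma reaches_le1 L lo hi q : reaches L (cst 0) (cst 1) lo hi q -> q <= 1.
Proof.
move=> h; have := h 0%N setT (@past_setT 0%N).
rewrite in_box_at01 !setTI {1}/pr probability_setT mulr1 => /le_trans; apply.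
exact/pr_le1/measurable_in_box_at.
Qed.

Lemma measurable_misses t0 L m lo hi : measurable (misses t0 L m lo hi).
Proof.
rewrite (_ : misses _ _ _ _ _ =
  \bigcap_(k in [set k | (k < m)%N]) ~` in_box_at (t0 + k * L + L) lo hi).
  by apply: bigcap_measurableType => k _; exact/measurableC/measurable_in_box_at.
by apply/seteqP; split=> w h k /h.
Qed.

Lemma missesS t0 L m lo hi :
  misses t0 L m.+1 lo hi = misses t0 L m lo hi `\` in_box_at (t0 + m * L + L) lo hi.
Proof.
apply/seteqP; split=> w /=.
  by move=> hw; split=> [k km|]; apply: hw => //; exact: ltnW.
by move=> [hw hm] k; rewrite ltnS leq_eqVlt => /predU1P[->|/hw].
Qed.

Lemma misses_le L lo hi q : reaches L (cst 0) (cst 1) lo hi q -> 0 <= q ->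
  forall t0 m, pr P (misses t0 L m lo hi) <= (1 - q) ^+ m.
Proof.
move=> h q0 t0; have q1 := reaches_le1 h.
have pmisses m : past (t0 + m * L) (misses t0 L m lo hi).
  elim: m => [|m IH].
    by rewrite (_ : misses _ _ _ _ _ = setT); [exact: past_setT|apply/seteqP; split].
  rewrite missesS setDE; apply: past_setI.
    by apply: past_mono IH; rewrite leq_add2l leq_mul2r leqnSn orbT.
  by apply: past_setC; apply: past_in_box_at; rewrite mulSnr addnA.
elim=> [|m IH]; first by rewrite expr0 pr_le1 //; exact: measurable_misses.
have := h _ _ (pmisses m); rewrite in_box_at01 setIT missesS.
rewrite prD; [|exact: measurable_misses|exact: measurable_in_box_at].
have := pr_ge0 P (measurable_misses t0 L m lo hi); rewrite exprS.
by move=> p0 hq; apply: le_trans (ler_wpM2l _ IH); nra.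
Qed.

Lemma misses_forever_negligible L lo hi q : reaches L (cst 0) (cst 1) lo hi q -> 0 < q ->
  forall t0, P.-negligible [set w | forall k, ~ in_box_at (t0 + k * L + L) lo hi w].
Proof.
move=> h q0 t0; have q1 := reaches_le1 h.
have mM : measurable (\bigcap_m misses t0 L m lo hi).
  by apply: bigcapT_measurable => m; exact: measurable_misses.
exists (\bigcap_m misses t0 L m lo hi); split => //; last by move=> w Nw m _ k _; exact: Nw.
rewrite prE //; congr EFin; apply/le_anti; rewrite pr_ge0 // andbT.
apply: (@geometric_le0 _ _ q); first by rewrite q0.
move=> m; apply: le_trans (misses_le h (ltW q0) t0 m).
by apply: pr_le => //; [exact: measurable_misses|exact: bigcap_inf].
Qed.

Hypothesis r0 : forall i, 0 <= r i.

Lemma reaches_push (c : R) : 0 < eta -> 0 <= c ->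
  reaches 1 (cst 0) (cst c) (cst 0) (cst (Num.max 0 (c - eta / 2))) (rho * (eta / 2) ^+ n).
Proof.
move=> eta0 c0; apply: (@reaches_step (cst (- eta))) => [|i|x z hx hz i]; first lra.
  by rewrite /cst; split; lra.
have /andP[avg0 avgc] := nbr_avg_bounds (r0 i) hx; have /andP[_ zi] := hz i.
rewrite /step /cst proj01_ge0 /=; apply: proj01_le; first by rewrite le_max lexx.
by rewrite le_max; apply/orP; right; rewrite /cst in zi; lra.
Qed.

Lemma reaches_pushes k : 0 < eta -> 0 <= rho ->
  reaches k (cst 0) (cst 1) (cst 0) (cst (Num.max 0 (1 - k%:R * (eta / 2))))
    ((rho * (eta / 2) ^+ n) ^+ k).
Proof.
move=> eta0 rho0; elim: k => [|k IH]; first by rewrite mul0r subr0 max_r // expr0; exact: reaches0.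
have -> : Num.max 0 (1 - (k.+1)%:R * (eta / 2)) =
           Num.max 0 (Num.max 0 (1 - k%:R * (eta / 2)) - eta / 2).
  by rewrite max0_subr; [congr (Num.max 0 _); ring|lra].
rewrite exprSr -addn1; apply: reaches_trans IH (reaches_push eta0 _) _.
  by rewrite le_max lexx.
by rewrite mulr_ge0 // exprn_ge0 //; lra.
Qed.

Lemma reaches_lift (u e : R) : 0 < e <= u -> u <= eta -> u <= 1 ->
  reaches 1 (cst 0) (cst 0) (cst (u - e)) (cst u) (rho * e ^+ n).
Proof.
move=> /andP[e0 eu] ue u1; apply: (@reaches_step (cst (u - e))) => [//|i|x z hx hz i].
  by rewrite /cst; split; lra.
have /andP[avg0 avg0'] := nbr_avg_bounds (r0 i) hx; have /andP[z1 z2] := hz i.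
rewrite /cst in z1 z2 *; rewrite /step.
by apply/andP; split; [apply: proj01_ge|apply: proj01_le]; lra.
Qed.

Lemma reaches_split (i0 : 'I_n) (u e c : R) : 0 < e <= u -> u <= eta -> c <= 1 ->
  c <= 2 * u - 2 * e ->
  reaches 1 (cst (u - e)) (cst u)
    (fun i => if i == i0 then c else 0) (fun i => if i == i0 then 1 else e)
    (rho * e ^+ n).
Proof.
move=> /andP[e0 eu] ue c1 c2u.
apply: (@reaches_step (fun i => if i == i0 then eta - e else - eta)) => [//|i|x z hx hz i].
  by case: (i == i0); split; lra.
have /andP[avg1 avg2] := nbr_avg_bounds (r0 i) hx; have /andP[z1 z2] := hz i.
rewrite /step; case: (i == i0) in z1 z2 *.
  by rewrite proj01_le1 andbT; apply: proj01_ge; lra.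
by rewrite proj01_ge0 /=; apply: proj01_le; lra.
Qed.

Lemma reaches_consensus : 0 < eta -> 0 <= rho ->
  reaches (push_steps eta) (cst 0) (cst 1) (cst 0) (cst 0) (push_prob n eta rho).
Proof. by move=> eta0 rho0; rewrite -{3}(push_steps_max0 eta0); exact: reaches_pushes. Qed.

Lemma reaches_separation (i0 : 'I_n) (u e c : R) : 0 < eta -> 0 <= rho ->
  0 < e <= u -> u <= eta -> u <= 1 -> c <= 1 -> c <= 2 * u - 2 * e ->
  reaches (push_steps eta + 1 + 1) (cst 0) (cst 1)
    (fun i => if i == i0 then c else 0) (fun i => if i == i0 then 1 else e)
    (push_prob n eta rho * (rho * e ^+ n) * (rho * e ^+ n)).
Proof.
move=> eta0 rho0 ue0 ue u1 c1 c2u.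
have qe : 0 <= rho * e ^+ n by case/andP: ue0 => e0 _; rewrite mulr_ge0 // exprn_ge0 // ltW.
apply: (reaches_trans _ (reaches_split i0 ue0 ue c1 c2u) qe).
exact: reaches_trans (reaches_consensus eta0 rho0) (reaches_lift ue0 ue u1) qe.
Qed.

End Reachability.

Lemma separation_gap (R : realType) (rm eta : R) : 0 <= rm -> rm < 1 -> rm / 2 < eta ->
  exists u e c : R,
    [/\ 0 < e <= u, u <= eta, u <= 1 & [/\ c <= 1, c <= 2 * u - 2 * e & rm < c - e]].
Proof.
move=> rm0 rm1 rme.
have [u [u1 ue ur]] : exists u : R, [/\ u <= 1, u <= eta & rm / 2 < u].
  exists (Num.min eta 1); split; rewrite ?ge_min ?lexx ?orbT //.
  by rewrite lt_min rme /=; lra.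
have [v [v1 vu rv]] : exists v : R, [/\ v <= 1, v <= 2 * u & rm < v].
  exists (Num.min 1 (2 * u)); split; rewrite ?ge_min ?lexx ?orbT //.
  by rewrite lt_min rm1 /=; lra.
have [c [c1 cu vc]] : exists c : R, [/\ c <= 1, c <= 2 * u - (v - rm) / 4 & v - (v - rm) / 4 <= c].
  exists (Num.min 1 (2 * u - (v - rm) / 4)); split; rewrite ?ge_min ?lexx ?orbT //.
  by rewrite le_min; apply/andP; split; lra.
exists u, ((v - rm) / 8), c; split=> //; last by split; lra.
by apply/andP; split; lra.
Qed.

Section QuasiSynchronization.
Variables (R : realType) (n : nat) (r : 'I_n -> R) (eta rho : R).
Hypothesis r0 : forall i, 0 <= r i.

Local Notation K := (push_steps eta).
Local Notation q := (push_prob n eta rho).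

Lemma quasi_sync_ae d (T : measurableType d) (P : probability T R)
    (xi : ('I_n -> R) -> 'I_n -> nat -> T -> R) x0 :
  0 < eta -> 0 < rho -> eta <= rmin r / 2 -> noise_ok P r eta rho xi -> in01 x0 ->
  {ae P, forall w, quasi_sync r (fun t => traj r (xi x0) x0 t w)}.
Proof.
move=> eta0 rho0 er nok hx0; have [mxi [xib A1xi]] := nok x0 hx0.
have hK := reaches_consensus mxi A1xi r0 eta0 (ltW rho0).
have q0 := push_prob_gt0 n eta0 rho0.
apply: negligibleS (misses_forever_negligible mxi hx0 hK q0 0) => w /= nqs k hk.
apply: nqs; have d0 : diam (traj r (xi x0) x0 (0 + k * K + K) w) <= 2 * eta.
  by apply: le_trans (diam_cst_box (lexx 0) hk) _; rewrite subrr mulr_ge0 // ltW.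
apply: le_trans (limn_sup_le_eventually (bounded_diam_traj _ _ _ hx0)
  (diam_traj_invariant (ltW eta0) _ (fun i t => xib i t w) d0)) _; lra.
Qed.

Lemma tail_bound : 0 < eta -> 0 < rho -> exists lam Lam : R, 0 < lam < 1 /\ 0 < Lam /\
  forall d (T : measurableType d) (P : probability T R)
      (xi : ('I_n -> R) -> 'I_n -> nat -> T -> R),
    noise_ok P r eta rho xi -> forall x0, in01 x0 -> forall s : R, 0 <= s ->
    (P [set w | forall t : nat, (t%:R <= s -> 2 * eta < diam (traj r (xi x0) x0 t w))%R]
      <= ((1 - lam) ^ (Num.floor (s / Lam)))%:E)%E.
Proof.
move=> eta0 rho0; have q0 := push_prob_gt0 n eta0 rho0; exists (Num.min q (1 / 2)), K%:R; split.
  by rewrite lt_min q0 gt_min /=; apply/andP; split; [lra|apply/orP; right; lra].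
split; first by rewrite ltr0n.
move=> d T P xi nok x0 hx0 s s0; have [mxi [xib A1xi]] := nok x0 hx0.
set A := [set w | _].
have mA : measurable A.
  apply: bigcap_measurableType => t _; rewrite -[X in measurable X]setTI.
  apply: measurable_fun_ltr => //; exact/measurable_diam/measurable_traj.
have K0 : 0 < K%:R :> R by rewrite ltr0n.
pose m := `|Num.floor (s / K%:R)|%N.
have fE : Num.floor (s / K%:R) = m%:Z by rewrite gez0_abs // floor_ge0 divr_ge0 // ltW.
have mK : (m * K)%:R <= s.
  by rewrite natrM -ler_pdivlMr // -[m%:R]/(m%:Z%:~R) -fE floor_le.
have AM : A `<=` misses r (xi x0) x0 0 K m (cst 0) (cst 0).
  move=> w Aw k km hk; have tk : (0 + k * K + K)%:R <= s.
    by apply: le_trans mK; rewrite ler_nat add0n -mulSnr leq_mul2r km orbT.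
  by have := Aw _ tk; have := diam_cst_box (lexx 0) hk; rewrite subrr; lra.
rewrite fE -exprnP (prE P mA) lee_fin.
apply: le_trans (pr_le P mA _ AM) _; first exact: measurable_misses.
have hK := reaches_consensus mxi A1xi r0 eta0 (ltW rho0).
have q1 : q <= 1 := reaches_le1 mxi hx0 hK.
apply: le_trans (misses_le mxi hx0 hK (ltW q0) 0 m) _.
have lq : Num.min q (1 / 2) <= q by rewrite ge_min lexx.
have l2 : Num.min q (1 / 2) <= 1 / 2 by rewrite ge_min lexx orbT.
by apply: lerXn2r; rewrite ?nnegrE; lra.
Qed.

Lemma noise_le_of_quasi_sync_ae d (T : measurableType d) (P : probability T R)
    (xi : ('I_n -> R) -> 'I_n -> nat -> T -> R) x0 :
  (1 < n)%N -> 0 < eta -> 0 < rho -> rmin r < 1 ->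
  noise_ok P r eta rho xi -> in01 x0 ->
  {ae P, forall w, quasi_sync r (fun t => traj r (xi x0) x0 t w)} -> eta <= rmin r / 2.
Proof.
move=> n1 eta0 rho0 rm1 nok hx0 ae; rewrite leNgt; apply/negP => hlt.
have [mxi [_ A1xi]] := nok x0 hx0.
have [u [e [c [ue0 ue u1 [c1 c2u gap]]]]] := separation_gap (rmin_ge0 r0) rm1 hlt.
pose i0 : 'I_n := Ordinal (ltnW n1); pose i1 : 'I_n := Ordinal n1.
have hsep := reaches_separation mxi A1xi r0 i0 eta0 (ltW rho0) ue0 ue u1 c1 c2u.
have qsep : 0 < push_prob n eta rho * (rho * e ^+ n) * (rho * e ^+ n).
  have [e0 _] := andP ue0; have qe : 0 < rho * e ^+ n by rewrite mulr_gt0 ?exprn_gt0.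
  by apply/mulr_gt0/qe/mulr_gt0/qe; exact: push_prob_gt0.
have : P.-negligible setT.
  apply: negligibleS (negligibleU ae (negligible_bigcup (fun M =>
    misses_forever_negligible mxi hx0 hsep qsep M))) => w _.
  have [qsw|] := pselect (quasi_sync r (fun t => traj r (xi x0) x0 t w)); last by left.
  right; have [M hM] := limn_sup_lt_eventually (bounded_diam_traj _ _ _ hx0) (le_lt_trans qsw gap).
  exists M => // k; set t := (M + k * _ + _)%N; rewrite /in_box_at /=.
  set x := traj r (xi x0) x0 t w => hx.
  have : diam x < c - e by apply: hM; rewrite /t -addnA leq_addr.
  have /andP[xc _] := hx i0; have /andP[_ xe] := hx i1; rewrite eqxx in xc.
  have i10 : (i1 == i0) = false by [].
  rewrite i10 in xe; have := diam_ge x i0 i1.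
  by have := ler_norm (x i0 - x i1); lra.
move=> /(measure_negligible measurableT) PT0; have : P setT = 0%E := PT0.
by rewrite probability_setT => /eqP; rewrite eqe oner_eq0.
Qed.

End QuasiSynchronization.

Theorem corollary1 (R : realType) (n : nat) (r : 'I_n -> R) (eta rho : R) :
  (3 <= n)%N -> (forall i, 0 < r i <= 1) -> 0 < eta -> 0 < rho -> rmin r < 1 ->
  (forall d (T : measurableType d) (P : probability T R)
      (xi : ('I_n -> R) -> 'I_n -> nat -> T -> R),
     noise_ok P r eta rho xi ->
     forall x0, in01 x0 ->
       ({ae P, forall w, quasi_sync r (fun t => traj r (xi x0) x0 t w)}
         <-> eta <= rmin r / 2))
  /\
  (eta <= rmin r / 2 ->
    (forall d (T : measurableType d) (P : probability T R)
        (xi : ('I_n -> R) -> 'I_n -> nat -> T -> R),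
       noise_ok P r eta rho xi ->
       forall x0, in01 x0 -> forall (w : T) (tau : nat),
         diam (traj r (xi x0) x0 tau w) <= 2 * eta ->
         (forall t, (t < tau)%N -> 2 * eta < diam (traj r (xi x0) x0 t w)) ->
         forall t, (tau <= t)%N -> diam (traj r (xi x0) x0 t w) <= 2 * eta)
    /\
    exists lam Lam : R, 0 < lam < 1 /\ 0 < Lam /\
      forall d (T : measurableType d) (P : probability T R)
          (xi : ('I_n -> R) -> 'I_n -> nat -> T -> R),
        noise_ok P r eta rho xi ->
        forall x0, in01 x0 -> forall s : R, 0 <= s ->
          (P [set w | forall t : nat, (t%:R <= s ->
                        2 * eta < diam (traj r (xi x0) x0 t w))%R]
            <= ((1 - lam) ^ (Num.floor (s / Lam)))%:E)%E).
Proof.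
move=> n3 hr eta0 rho0 rm1; have r0 i : 0 <= r i by case/andP: (hr i) => /ltW.
have n1 : (1 < n)%N by lia.
split=> [d T P xi nok x0 hx0|er].
  split=> [ae|er]; first exact: (noise_le_of_quasi_sync_ae r0 n1 eta0 rho0 rm1 nok hx0 ae).
  exact: (quasi_sync_ae r0 eta0 rho0 er nok hx0).
split; last exact: tail_bound r0 eta0 rho0.
move=> d T P xi nok x0 hx0 w tau hd _; have [_ [xib _]] := nok x0 hx0.
by apply: diam_traj_invariant (ltW eta0) _ (fun i t => xib i t w) hd; lra.
Qed.
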